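(* Let $\lambda>0$ and let $\mathbf r_\lambda=(\mathbf r_{1\lambda},\dots,\mathbf r_{N\lambda})\in\mathfrak R$ be any point at which $f+\lambda g$ attains its minimum over $\mathfrak R$. Write $\mathbf r_{i\lambda}=(x_{i\lambda},y_{i\lambda})=|\mathbf r_{i\lambda}|(\cos\varphi_{i\lambda},\sin\varphi_{i\lambda})$, put $\omega=\sqrt{2\lambda}$, and define for $t\ge 0$ $$\mathbf r_{i\lambda}(t)=|\mathbf r_{i\lambda}|\big(\cos(\varphi_{i\lambda}+\omega t),\ \sin(\varphi_{i\lambda}+\omega t)\big),\qquad i=1,\dots,N .$$ Then $\mathbf r_\lambda(t)=(\mathbf r_{1\lambda}(t),\dots,\mathbf r_{N\lambda}(t))$, $t\ge0$, is a solution of the equations of motion $m_i\ddot{\mathbf r}_i=\mathbf F_i(\mathbf r)$, $i=1,\dots,N$, with initial conditions $\mathbf r_i(0)=\mathbf r_{i\lambda}$, $\dot{\mathbf r}_i(0)=(-\omega y_{i\lambda},\ \omega x_{i\lambda})$, $i=1,\dots,N$.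
   Context: Fix $N\ge 2$, masses $m_1,\dots,m_N>0$ and a constant $\gamma>0$. The planar configuration space is $\mathfrak R=\{\mathbf r=(\mathbf r_1,\dots,\mathbf r_N)\in(\mathbb R^2)^N:\ \mathbf r_i\neq\mathbf r_j \text{ for } i\neq j\}$. Define $f(\mathbf r)=\sum_{i<j}\frac{\gamma m_im_j}{|\mathbf r_j-\mathbf r_i|}$ and $g(\mathbf r)=\sum_i m_i|\mathbf r_i|^2$ on $\mathfrak R$. The force on particle $i$ is $\mathbf F_i(\mathbf r)=\sum_{j\ne i}\frac{\gamma m_im_j(\mathbf r_j-\mathbf r_i)}{|\mathbf r_j-\mathbf r_i|^3}$. For every $\lambda>0$ the function $f+\lambda g$ attains its minimum on $\mathfrak R$. *)

From Stdlib Require Import Reals Lra Arith.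
From Coquelicot Require Import Coquelicot.
Open Scope R_scope.

(* Particles are indexed by 0, ..., N-1. A planar configuration is given by
   its coordinate functions xs ys : nat -> R (particle i is at (xs i, ys i));
   only the values at indices i < N matter. *)

Fixpoint fsum (n : nat) (a : nat -> R) : R :=
  match n with
  | O => 0
  | S k => fsum k a + a k
  end.

Definition dist2 (xs ys : nat -> R) (i j : nat) : R :=
  sqrt ((xs j - xs i) ^ 2 + (ys j - ys i) ^ 2).

Definition in_config (N : nat) (xs ys : nat -> R) : Prop :=
  forall i j, (i < N)%nat -> (j < N)%nat -> i <> j ->
    (xs i, ys i) <> (xs j, ys j).

Definition fpot (N : nat) (m : nat -> R) (gamma : R) (xs ys : nat -> R) : R :=
  fsum N (fun i => fsum N (fun j =>
    if Nat.ltb i j then gamma * m i * m j / dist2 xs ys i j else 0)).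

Definition gmom (N : nat) (m : nat -> R) (xs ys : nat -> R) : R :=
  fsum N (fun i => m i * (xs i ^ 2 + ys i ^ 2)).

Definition Fx (N : nat) (m : nat -> R) (gamma : R) (xs ys : nat -> R) (i : nat) : R :=
  fsum N (fun j => if Nat.eqb j i then 0
    else gamma * m i * m j * (xs j - xs i) / dist2 xs ys i j ^ 3).

Definition Fy (N : nat) (m : nat -> R) (gamma : R) (xs ys : nat -> R) (i : nat) : R :=
  fsum N (fun j => if Nat.eqb j i then 0
    else gamma * m i * m j * (ys j - ys i) / dist2 xs ys i j ^ 3).

Definition is_minimizer (N : nat) (m : nat -> R) (gamma lambda : R)
    (xs ys : nat -> R) : Prop :=
  in_config N xs ys /\
  forall xs' ys', in_config N xs' ys' ->
    fpot N m gamma xs ys + lambda * gmom N m xs ys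
      <= fpot N m gamma xs' ys' + lambda * gmom N m xs' ys'.

(* A minimiser of f + λg is a critical point for moving any single particle
   along any line; since ∇_i f = F_i and ∇_i g = 2 m_i r_i, this gives
   F_i(r_λ) = -2λ m_i r_{iλ}, i.e. r_λ is a central configuration. The forces
   commute with rotations of the plane, so the configuration rotated rigidly by
   the angle ωt is still central with the same constant, while every particle
   of it moves on a circle with acceleration -ω² r_i(t) = -2λ r_i(t).
   The hypotheses N >= 2, m_i > 0 and γ > 0 only matter for the existence of
   the minimiser, which is assumed. *)

From Stdlib Require Import Reals Lra Lia Classical_Prop FunctionalExtensionality.
From Coquelicot Require Import Coquelicot.
Open Scope R_scope.

Lemma fsum_ext n a b : (forall k, (k < n)%nat -> a k = b k) -> fsum n a = fsum n b.
Proof.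
  induction n as [|n IH]; intros H; simpl; [reflexivity|].
  rewrite IH by (intros; apply H; lia); rewrite H by lia; reflexivity.
Qed.

Lemma fsum_plus n a b : fsum n (fun k => a k + b k) = fsum n a + fsum n b.
Proof. induction n as [|n IH]; simpl; [lra|]. rewrite IH; ring. Qed.

Lemma fsum_scal n c a : fsum n (fun k => c * a k) = c * fsum n a.
Proof. induction n as [|n IH]; simpl; [lra|]. rewrite IH; ring. Qed.

Lemma fsum_zero n : fsum n (fun _ => 0) = 0.
Proof. induction n as [|n IH]; simpl; [lra|]. rewrite IH; ring. Qed.

Lemma fsum_indicator n i c : (i < n)%nat ->
  fsum n (fun k => if Nat.eqb k i then c else 0) = c.
Proof.
  induction n as [|n IH]; simpl; intros Hi; [lia|].
  destruct (Nat.eqb_spec n i) as [->|Hni].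
  - rewrite (fsum_ext _ _ (fun _ => 0)), fsum_zero; [ring|].
    intros k Hk; destruct (Nat.eqb_spec k i); [lia|reflexivity].
  - rewrite IH by lia; ring.
Qed.

Lemma fsum_pairs_through n i (G : nat -> R) : (i < n)%nat ->
  fsum n (fun a => fsum n (fun b => if Nat.ltb a b then
    (if Nat.eqb a i then G b else 0) + (if Nat.eqb b i then G a else 0) else 0)) =
  fsum n (fun j => if Nat.eqb j i then 0 else G j).
Proof.
  intros Hi.
  transitivity (fsum n (fun a => if Nat.eqb a i then
                  fsum n (fun b => if Nat.ltb i b then G b else 0) else 0) +
                fsum n (fun a => if Nat.ltb a i then G a else 0)).
  { rewrite <- fsum_plus; apply fsum_ext; intros a _.
    rewrite <- (fsum_indicator n i (if Nat.ltb a i then G a else 0)) by exact Hi.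
    replace (if Nat.eqb a i then fsum n (fun b => if Nat.ltb i b then G b else 0) else 0)
      with (fsum n (fun b => if Nat.eqb a i then (if Nat.ltb i b then G b else 0) else 0))
      by (destruct (Nat.eqb a i); [reflexivity|apply fsum_zero]).
    rewrite <- fsum_plus; apply fsum_ext; intros b _.
    destruct (Nat.ltb_spec a b), (Nat.eqb_spec a i), (Nat.eqb_spec b i),
      (Nat.ltb_spec i b), (Nat.ltb_spec a i); subst; try lia; ring. }
  rewrite fsum_indicator, <- fsum_plus by exact Hi.
  apply fsum_ext; intros j _.
  destruct (Nat.eqb_spec j i), (Nat.ltb_spec i j), (Nat.ltb_spec j i); try lia; ring.
Qed.

Lemma is_derive_fsum n (a : nat -> R -> R) d x :
  (forall k, (k < n)%nat -> is_derive (a k) x (d k)) ->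
  is_derive (fun s => fsum n (fun k => a k s)) x (fsum n d).
Proof.
  induction n as [|n IH]; simpl; intros H.
  - exact (is_derive_const _ _).
  - apply (@is_derive_plus R_AbsRing R_NormedModule); [apply IH; intros|]; apply H; lia.
Qed.

Lemma finite_pos_lower_bound n (P : nat -> Prop) (d : nat -> R) :
  (forall b, (b < n)%nat -> P b -> 0 < d b) ->
  exists e, 0 < e /\ forall b, (b < n)%nat -> P b -> e <= d b.
Proof.
  induction n as [|n IH]; intros H.
  - exists 1; split; [lra|]; intros; lia.
  - destruct IH as [e [He Hb]]; [intros; apply H; auto; lia|].
    destruct (classic (P n)) as [Pn|Pn].
    + exists (Rmin e (d n)); split; [apply Rmin_pos; auto|].
      intros b Hbn Pb; destruct (Nat.eq_dec b n) as [->|]; [apply Rmin_r|].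
      apply Rle_trans with e; [apply Rmin_l | apply Hb; auto; lia].
    + exists e; split; [exact He|].
      intros b Hbn Pb; destruct (Nat.eq_dec b n) as [->|]; [tauto|].
      apply Hb; auto; lia.
Qed.

Lemma is_derive_local_min (h : R -> R) x l e : 0 < e -> is_derive h x l ->
  (forall s, Rabs (s - x) < e -> h x <= h s) -> l = 0.
Proof.
  intros He Hd Hmin; apply is_derive_Reals in Hd.
  rewrite <- (derive_pt_eq_0 h x l (exist _ l Hd) Hd).
  apply (deriv_minimum h (x - e) (x + e)); try lra.
  intros s H1 H2; apply Hmin, Rabs_def1; lra.
Qed.

Lemma is_derive_inv_norm_line c p q u v : 0 < p ^ 2 + q ^ 2 ->
  is_derive (fun s => c / sqrt ((p + s * u) ^ 2 + (q + s * v) ^ 2)) 0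
    (- c * (u * p + v * q) / sqrt (p ^ 2 + q ^ 2) ^ 3).
Proof.
  intros Hpq.
  assert (Hr : 0 < sqrt (p ^ 2 + q ^ 2)) by (apply sqrt_lt_R0; exact Hpq).
  auto_derive;
    replace ((p + 0 * u) * ((p + 0 * u) * 1) + (q + 0 * v) * ((q + 0 * v) * 1))
      with (p ^ 2 + q ^ 2) by ring;
    [repeat split; lra | field; lra].
Qed.

Lemma dist2_sym xs ys i j : dist2 xs ys i j = dist2 xs ys j i.
Proof. unfold dist2; f_equal; ring. Qed.

Lemma in_config_dist_pos N xs ys i j : in_config N xs ys ->
  (i < N)%nat -> (j < N)%nat -> i <> j -> 0 < (xs j - xs i) ^ 2 + (ys j - ys i) ^ 2.
Proof.
  intros Hc Hi Hj Hij.
  destruct (Req_dec (xs j - xs i) 0) as [Hx|Hx].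
  - destruct (Req_dec (ys j - ys i) 0) as [Hy|Hy].
    + exfalso; apply (Hc i j Hi Hj Hij); f_equal; lra.
    + pose proof (pow2_gt_0 _ Hy); pose proof (pow2_ge_0 (xs j - xs i)); lra.
  - pose proof (pow2_gt_0 _ Hx); pose proof (pow2_ge_0 (ys j - ys i)); lra.
Qed.

Lemma in_config_separated N xs ys i : in_config N xs ys -> (i < N)%nat ->
  exists e, 0 < e /\ forall j, (j < N)%nat -> j <> i ->
    e <= (xs j - xs i) ^ 2 + (ys j - ys i) ^ 2.
Proof.
  intros Hc Hi; apply finite_pos_lower_bound.
  intros j Hj Hji; apply (in_config_dist_pos N); auto.
Qed.

Definition move_particle (xs : nat -> R) (i : nat) (u s : R) : nat -> R :=
  fun j => if Nat.eqb j i then xs j + s * u else xs j.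

Lemma move_particle_0 xs i u : move_particle xs i u 0 = xs.
Proof.
  apply functional_extensionality; intros j; unfold move_particle.
  destruct (Nat.eqb j i); ring.
Qed.

Lemma move_particle_in_config N xs ys i u v s e :
  in_config N xs ys -> u ^ 2 + v ^ 2 = 1 -> s ^ 2 < e ->
  (forall j, (j < N)%nat -> j <> i -> e <= (xs j - xs i) ^ 2 + (ys j - ys i) ^ 2) ->
  in_config N (move_particle xs i u s) (move_particle ys i v s).
Proof.
  intros Hc Huv Hs Hsep j k Hj Hk Hjk Heq.
  injection Heq as Ex Ey; unfold move_particle in Ex, Ey.
  assert (Hshift : forall l, (l < N)%nat -> l <> i ->
            (xs l - xs i) ^ 2 + (ys l - ys i) ^ 2 <> s ^ 2 * (u ^ 2 + v ^ 2)).
  { intros l Hl Hli; pose proof (Hsep l Hl Hli); rewrite Huv; lra. }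
  destruct (Nat.eqb_spec j i), (Nat.eqb_spec k i); subst.
  - lia.
  - apply (Hshift k Hk); auto; rewrite <- Ex, <- Ey; ring.
  - apply (Hshift j Hj); auto; rewrite Ex, Ey; ring.
  - apply (Hc j k Hj Hk Hjk); rewrite Ex, Ey; reflexivity.
Qed.

(* The rate of change of γ m_i m_j / |r_j - r_i| when particle i moves with
   velocity (u, v). *)
Definition pair_rate (m : nat -> R) (gamma : R) (xs ys : nat -> R) (i : nat)
    (u v : R) (j : nat) : R :=
  gamma * m i * m j * (u * (xs j - xs i) + v * (ys j - ys i)) / dist2 xs ys i j ^ 3.

Lemma is_derive_dist_moving xs ys i j u v c : j <> i ->
  0 < (xs j - xs i) ^ 2 + (ys j - ys i) ^ 2 ->
  is_derive (fun s => c / dist2 (move_particle xs i u s) (move_particle ys i v s) i j) 0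
    (c * (u * (xs j - xs i) + v * (ys j - ys i)) / dist2 xs ys i j ^ 3).
Proof.
  intros Hji Hpos.
  apply (is_derive_ext (fun s => c / sqrt ((xs j - xs i + s * - u) ^ 2 +
                                          (ys j - ys i + s * - v) ^ 2))).
  - intros s; unfold dist2, move_particle.
    rewrite Nat.eqb_refl, (proj2 (Nat.eqb_neq j i) Hji); do 3 f_equal; ring.
  - replace (c * (u * (xs j - xs i) + v * (ys j - ys i)) / dist2 xs ys i j ^ 3)
      with (- c * (- u * (xs j - xs i) + - v * (ys j - ys i)) /
            sqrt ((xs j - xs i) ^ 2 + (ys j - ys i) ^ 2) ^ 3)
      by (unfold dist2, Rdiv; ring).
    apply is_derive_inv_norm_line; exact Hpos.
Qed.

Lemma is_derive_pair_potential N m gamma xs ys i u v a b :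
  in_config N xs ys -> (a < N)%nat -> (b < N)%nat ->
  is_derive (fun s => if Nat.ltb a b then
      gamma * m a * m b / dist2 (move_particle xs i u s) (move_particle ys i v s) a b
    else 0) 0
    (if Nat.ltb a b then
       (if Nat.eqb a i then pair_rate m gamma xs ys i u v b else 0) +
       (if Nat.eqb b i then pair_rate m gamma xs ys i u v a else 0)
     else 0).
Proof.
  intros Hc Ha Hb; unfold pair_rate.
  destruct (Nat.ltb_spec a b); [|exact (is_derive_const _ _)].
  destruct (Nat.eqb_spec a i) as [->|Hai], (Nat.eqb_spec b i) as [->|Hbi]; try lia.
  - rewrite Rplus_0_r.
    apply is_derive_dist_moving; [lia|apply (in_config_dist_pos N); auto; lia].
  - rewrite Rplus_0_l.
    apply (is_derive_ext (fun s => gamma * m i * m a /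
             dist2 (move_particle xs i u s) (move_particle ys i v s) i a)).
    + intros s; simpl; rewrite dist2_sym; unfold Rdiv; ring.
    + apply is_derive_dist_moving; [lia|apply (in_config_dist_pos N); auto; lia].
  - apply (is_derive_ext (fun _ => gamma * m a * m b / dist2 xs ys a b)).
    + intros s; unfold dist2, move_particle.
      rewrite (proj2 (Nat.eqb_neq a i) Hai), (proj2 (Nat.eqb_neq b i) Hbi); reflexivity.
    + rewrite Rplus_0_r; exact (is_derive_const _ _).
Qed.

Lemma is_derive_moment_term m xs ys i u v a :
  is_derive (fun s => m a * (move_particle xs i u s a ^ 2 + move_particle ys i v s a ^ 2)) 0
    (if Nat.eqb a i then 2 * m i * (u * xs i + v * ys i) else 0).
Proof.
  unfold move_particle; destruct (Nat.eqb_spec a i) as [->|].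
  - auto_derive; [exact I|simpl; ring].
  - exact (is_derive_const _ _).
Qed.

Lemma force_along_eq_pair_rates N m gamma xs ys i u v :
  u * Fx N m gamma xs ys i + v * Fy N m gamma xs ys i =
  fsum N (fun j => if Nat.eqb j i then 0 else pair_rate m gamma xs ys i u v j).
Proof.
  unfold Fx, Fy; rewrite <- !fsum_scal, <- fsum_plus.
  apply fsum_ext; intros j _; unfold pair_rate.
  destruct (Nat.eqb j i); unfold Rdiv; ring.
Qed.

Lemma is_derive_energy_move_particle N m gamma lambda xs ys i u v :
  in_config N xs ys -> (i < N)%nat ->
  is_derive (fun s => fpot N m gamma (move_particle xs i u s) (move_particle ys i v s) +
                      lambda * gmom N m (move_particle xs i u s) (move_particle ys i v s)) 0
    (u * Fx N m gamma xs ys i + v * Fy N m gamma xs ys i +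
     lambda * (2 * m i * (u * xs i + v * ys i))).
Proof.
  intros Hc Hi.
  rewrite force_along_eq_pair_rates, <- fsum_pairs_through by exact Hi.
  rewrite <- (fsum_indicator N i (2 * m i * (u * xs i + v * ys i))) by exact Hi.
  apply (@is_derive_plus R_AbsRing R_NormedModule); [|apply is_derive_scal];
    apply is_derive_fsum; intros a Ha; [apply is_derive_fsum; intros b Hb|].
  - apply (is_derive_pair_potential N); auto.
  - apply is_derive_moment_term.
Qed.

Lemma minimizer_stationary N m gamma lambda xs ys i u v :
  is_minimizer N m gamma lambda xs ys -> (i < N)%nat -> u ^ 2 + v ^ 2 = 1 ->
  u * Fx N m gamma xs ys i + v * Fy N m gamma xs ys i +
  lambda * (2 * m i * (u * xs i + v * ys i)) = 0.
Proof.
  intros [Hc Hmin] Hi Huv.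
  destruct (in_config_separated N xs ys i Hc Hi) as [e [He Hsep]].
  apply (is_derive_local_min _ 0 _ (sqrt e) (sqrt_lt_R0 e He)
           (is_derive_energy_move_particle N m gamma lambda xs ys i u v Hc Hi)).
  intros s Hs; rewrite !move_particle_0; apply Hmin.
  apply (move_particle_in_config N xs ys i u v s e Hc Huv); [|exact Hsep].
  rewrite Rminus_0_r in Hs; rewrite <- pow2_abs, <- (pow2_sqrt e) by lra.
  pose proof (Rabs_pos s); nra.
Qed.

Definition central_config (N : nat) (m : nat -> R) (gamma k : R) (xs ys : nat -> R) : Prop :=
  forall i, (i < N)%nat ->
    Fx N m gamma xs ys i = - k * m i * xs i /\ Fy N m gamma xs ys i = - k * m i * ys i.

Lemma minimizer_central_config N m gamma lambda xs ys :
  is_minimizer N m gamma lambda xs ys -> central_config N m gamma (2 * lambda) xs ys.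
Proof.
  intros Hmin i Hi; split.
  - pose proof (minimizer_stationary N m gamma lambda xs ys i 1 0 Hmin Hi); lra.
  - pose proof (minimizer_stationary N m gamma lambda xs ys i 0 1 Hmin Hi); lra.
Qed.

Lemma forces_ext N m gamma xs ys xs' ys' i : (i < N)%nat ->
  (forall j, (j < N)%nat -> xs j = xs' j /\ ys j = ys' j) ->
  Fx N m gamma xs ys i = Fx N m gamma xs' ys' i /\
  Fy N m gamma xs ys i = Fy N m gamma xs' ys' i.
Proof.
  intros Hi Heq; destruct (Heq i Hi) as [Exi Eyi]; unfold Fx, Fy, dist2.
  split; apply fsum_ext; intros j Hj; destruct (Heq j Hj) as [Exj Eyj];
    rewrite Exi, Eyi, Exj, Eyj; reflexivity.
Qed.

Lemma central_config_ext N m gamma k xs ys xs' ys' :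
  (forall j, (j < N)%nat -> xs j = xs' j /\ ys j = ys' j) ->
  central_config N m gamma k xs ys -> central_config N m gamma k xs' ys'.
Proof.
  intros Heq Hcc i Hi.
  destruct (forces_ext N m gamma xs ys xs' ys' i Hi Heq) as [Ex Ey].
  destruct (Hcc i Hi) as [Hx Hy], (Heq i Hi) as [Exi Eyi].
  rewrite <- Ex, <- Ey, Hx, Hy, Exi, Eyi; split; reflexivity.
Qed.

Lemma in_config_ext N xs ys xs' ys' :
  (forall j, (j < N)%nat -> xs j = xs' j /\ ys j = ys' j) ->
  in_config N xs ys -> in_config N xs' ys'.
Proof.
  intros Heq Hc i j Hi Hj Hij.
  destruct (Heq i Hi) as [<- <-], (Heq j Hj) as [<- <-]; apply Hc; auto.
Qed.

Definition rotate_x (c s : R) (xs ys : nat -> R) : nat -> R := fun k => c * xs k - s * ys k.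
Definition rotate_y (c s : R) (xs ys : nat -> R) : nat -> R := fun k => s * xs k + c * ys k.

Lemma dist2_rotate xs ys c s i j : c ^ 2 + s ^ 2 = 1 ->
  dist2 (rotate_x c s xs ys) (rotate_y c s xs ys) i j = dist2 xs ys i j.
Proof.
  intros Hcs; unfold dist2, rotate_x, rotate_y; f_equal.
  transitivity ((c ^ 2 + s ^ 2) * ((xs j - xs i) ^ 2 + (ys j - ys i) ^ 2)); [ring|].
  rewrite Hcs; ring.
Qed.

Lemma in_config_rotate N xs ys c s : c ^ 2 + s ^ 2 = 1 ->
  in_config N xs ys -> in_config N (rotate_x c s xs ys) (rotate_y c s xs ys).
Proof.
  intros Hcs Hc i j Hi Hj Hij Heq; injection Heq as Ex Ey.
  assert (Hinv : forall k,
            xs k = c * rotate_x c s xs ys k + s * rotate_y c s xs ys k /\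
            ys k = - s * rotate_x c s xs ys k + c * rotate_y c s xs ys k).
  { intros k; unfold rotate_x, rotate_y; split;
      [transitivity ((c ^ 2 + s ^ 2) * xs k) | transitivity ((c ^ 2 + s ^ 2) * ys k)];
      solve [rewrite Hcs; ring | ring]. }
  apply (Hc i j Hi Hj Hij).
  rewrite (proj1 (Hinv i)), (proj2 (Hinv i)), (proj1 (Hinv j)), (proj2 (Hinv j)).
  rewrite Ex, Ey; reflexivity.
Qed.

Lemma Fx_rotate N m gamma xs ys c s i : c ^ 2 + s ^ 2 = 1 ->
  Fx N m gamma (rotate_x c s xs ys) (rotate_y c s xs ys) i =
  c * Fx N m gamma xs ys i - s * Fy N m gamma xs ys i.
Proof.
  intros Hcs; transitivity (c * Fx N m gamma xs ys i + - s * Fy N m gamma xs ys i); [|ring].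
  unfold Fx, Fy; rewrite <- !fsum_scal, <- fsum_plus.
  apply fsum_ext; intros j _; rewrite dist2_rotate by exact Hcs.
  unfold rotate_x, rotate_y; destruct (Nat.eqb j i); unfold Rdiv; ring.
Qed.

Lemma Fy_rotate N m gamma xs ys c s i : c ^ 2 + s ^ 2 = 1 ->
  Fy N m gamma (rotate_x c s xs ys) (rotate_y c s xs ys) i =
  s * Fx N m gamma xs ys i + c * Fy N m gamma xs ys i.
Proof.
  intros Hcs; unfold Fx, Fy; rewrite <- !fsum_scal, <- fsum_plus.
  apply fsum_ext; intros j _; rewrite dist2_rotate by exact Hcs.
  unfold rotate_x, rotate_y; destruct (Nat.eqb j i); unfold Rdiv; ring.
Qed.

Lemma central_config_rotate N m gamma k xs ys c s : c ^ 2 + s ^ 2 = 1 ->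
  central_config N m gamma k xs ys ->
  central_config N m gamma k (rotate_x c s xs ys) (rotate_y c s xs ys).
Proof.
  intros Hcs Hcc i Hi; rewrite Fx_rotate, Fy_rotate by exact Hcs.
  destruct (Hcc i Hi) as [-> ->]; unfold rotate_x, rotate_y; split; ring.
Qed.

Lemma polar_rotate r p th x y : x = r * cos p -> y = r * sin p ->
  r * cos (p + th) = cos th * x - sin th * y /\ r * sin (p + th) = sin th * x + cos th * y.
Proof. intros -> ->; rewrite cos_plus, sin_plus; split; ring. Qed.

Lemma is_derive_orbit_x a p w t :
  is_derive (fun t => a * cos (p + w * t)) t (- w * (a * sin (p + w * t))).
Proof. auto_derive; [exact I|simpl; ring]. Qed.

Lemma is_derive_orbit_y a p w t :
  is_derive (fun t => a * sin (p + w * t)) t (w * (a * cos (p + w * t))).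
Proof. auto_derive; [exact I|simpl; ring]. Qed.

Lemma is_derive_velocity_orbit_x a p w t :
  is_derive (Derive (fun t => a * cos (p + w * t))) t (- w ^ 2 * (a * cos (p + w * t))).
Proof.
  apply (is_derive_ext (fun t => - w * (a * sin (p + w * t)))).
  - intros s; symmetry; apply is_derive_unique, is_derive_orbit_x.
  - auto_derive; [exact I|simpl; ring].
Qed.

Lemma is_derive_velocity_orbit_y a p w t :
  is_derive (Derive (fun t => a * sin (p + w * t))) t (- w ^ 2 * (a * sin (p + w * t))).
Proof.
  apply (is_derive_ext (fun t => w * (a * cos (p + w * t)))).
  - intros s; symmetry; apply is_derive_unique, is_derive_orbit_y.
  - auto_derive; [exact I|simpl; ring].
Qed.

Theorem theorem3p1 (N : nat) (m : nat -> R) (gamma lambda : R)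
  (xl yl : nat -> R) (phi : nat -> R) :
  (2 <= N)%nat ->
  (forall i, (i < N)%nat -> 0 < m i) ->
  0 < gamma ->
  0 < lambda ->
  is_minimizer N m gamma lambda xl yl ->
  (* polar form r_{i lambda} = |r_{i lambda}| (cos phi_i, sin phi_i) *)
  (forall i, (i < N)%nat ->
     xl i = sqrt (xl i ^ 2 + yl i ^ 2) * cos (phi i) /\
     yl i = sqrt (xl i ^ 2 + yl i ^ 2) * sin (phi i)) ->
  let omega := sqrt (2 * lambda) in
  let X := fun i t => sqrt (xl i ^ 2 + yl i ^ 2) * cos (phi i + omega * t) in
  let Y := fun i t => sqrt (xl i ^ 2 + yl i ^ 2) * sin (phi i + omega * t) in
  (* the trajectory stays in the configuration space *)
  (forall t, 0 <= t -> in_config N (fun j => X j t) (fun j => Y j t)) /\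
  (forall i, (i < N)%nat ->
     (* differentiability of the positions *)
     (forall t, ex_derive (X i) t /\ ex_derive (Y i) t) /\
     (* equations of motion m_i r_i'' = F_i(r) for t >= 0 *)
     (forall t, 0 <= t ->
        exists ax ay,
          is_derive (Derive (X i)) t ax /\ is_derive (Derive (Y i)) t ay /\
          m i * ax = Fx N m gamma (fun j => X j t) (fun j => Y j t) i /\
          m i * ay = Fy N m gamma (fun j => X j t) (fun j => Y j t) i) /\
     (* initial conditions *)
     X i 0 = xl i /\ Y i 0 = yl i /\
     Derive (X i) 0 = - omega * yl i /\ Derive (Y i) 0 = omega * xl i).
Proof.
  intros _ _ _ Hl Hmin Hpol omega X Y.
  assert (Hom : omega ^ 2 = 2 * lambda) by (apply pow2_sqrt; lra).
  assert (Hcs : forall t, cos (omega * t) ^ 2 + sin (omega * t) ^ 2 = 1).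
  { intros t; rewrite <- (sin2_cos2 (omega * t)); unfold Rsqr; ring. }
  assert (Hrot : forall t j, (j < N)%nat ->
            rotate_x (cos (omega * t)) (sin (omega * t)) xl yl j = X j t /\
            rotate_y (cos (omega * t)) (sin (omega * t)) xl yl j = Y j t).
  { intros t j Hj; destruct (Hpol j Hj) as [Hx Hy].
    destruct (polar_rotate _ _ (omega * t) _ _ Hx Hy) as [Ex Ey].
    unfold X, Y; rewrite Ex, Ey; split; reflexivity. }
  split.
  - intros t _; apply (in_config_ext N _ _ _ _ (Hrot t)), in_config_rotate;
      [apply Hcs | exact (proj1 Hmin)].
  - intros i Hi; destruct (Hpol i Hi) as [Hx0 Hy0]; split; [|split].
    + intros t; split; eexists; [apply is_derive_orbit_x | apply is_derive_orbit_y].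
    + intros t _.
      destruct (central_config_ext N m gamma _ _ _ _ _ (Hrot t)
                  (central_config_rotate N m gamma _ _ _ _ _ (Hcs t)
                     (minimizer_central_config N m gamma lambda xl yl Hmin)) i Hi)
        as [-> ->].
      exists (- omega ^ 2 * X i t), (- omega ^ 2 * Y i t).
      split; [apply is_derive_velocity_orbit_x|split; [apply is_derive_velocity_orbit_y|]].
      rewrite Hom; split; ring.
    + unfold X, Y.
      rewrite (is_derive_unique _ _ _ (is_derive_orbit_x _ _ _ 0)),
              (is_derive_unique _ _ _ (is_derive_orbit_y _ _ _ 0)).
      rewrite Rmult_0_r, Rplus_0_r, <- Hx0, <- Hy0; repeat split; ring.
Qed.
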